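(* Let $V$ be a finite-dimensional vector space over a finite field of characteristic $p$, equipped with a bilinear or hermitian form which is either nondegenerate or identically zero, and let $\Delta=\Delta(V)$ be the group of all similarities of $V$ (with respect to this form). Let $x\in\Delta$ be an element of prime-power order whose image in $\Delta/\mathrm{Z}(\Delta)$ has prime order. Then one of the following holds: (1) $x$ is unipotent and stabilizes a $1$-dimensional subspace; (2) the form is identically zero, $x$ is semisimple and leaves invariant two nonzero subspaces complementing each other; (3) the form is nondegenerate, $x$ is semisimple and leaves invariant a proper nonzero nondegenerate subspace and its orthogonal complement; (4) the form is nondegenerate and of maximal Witt index, $x$ is semisimple and leaves invariant a totally isotropic subspace of dimension $\frac{1}{2}\dim V$; (5) $x$ is semisimple and acts irreducibly on $V$.
   Context: An element is unipotent if its order is a power of $p$ and semisimple if its order is coprime to $p$. A subspace is nondegenerate if the restriction of the form to it is nondegenerate, and totally isotropic if the restriction of the form to it is identically zero. *)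

(* V = 'rV[F]_n (row vectors), linear maps act on the right
   (v |-> v *m x), subspaces are row spaces of matrices (mxalgebra). *)
From HB Require Import structures.
From mathcomp Require Import all_boot all_order all_algebra.
Set Implicit Arguments. Unset Strict Implicit. Unset Printing Implicit Defensive.
Import GRing.Theory.
Local Open Scope ring_scope.

Section Forms.
Variables (F : finFieldType) (n : nat) (sigma : {rmorphism F -> F}) (B : 'M[F]_n).

Definition sform (u v : 'rV[F]_n) : F := (u *m B *m (map_mx sigma v)^T) 0 0.

(* hermitian w.r.t. sigma (for sigma = id: symmetric bilinear) *)
Definition is_hermitian : Prop := forall u v, sform v u = sigma (sform u v).
Definition is_alternating : Prop := forall v, sform v v = 0.

Definition nondeg_on (U : 'M[F]_n) : Prop :=
  forall u, (u <= U)%MS -> (forall w, (w <= U)%MS -> sform u w = 0) -> u = 0.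
Definition form_nondeg : Prop := nondeg_on 1%:M.

Definition tot_isotropic (U : 'M[F]_n) : Prop :=
  forall u w, (u <= U)%MS -> (w <= U)%MS -> sform u w = 0.

Definition max_witt_index : Prop :=
  exists U : 'M[F]_n, tot_isotropic U /\ (\rank U).*2 = n.

Definition in_perp (U : 'M[F]_n) (v : 'rV[F]_n) : Prop :=
  forall u, (u <= U)%MS -> sform u v = 0.

Definition is_similarity (x : 'M[F]_n) : Prop :=
  x \in unitmx /\ exists lam : F, lam != 0 /\
    forall u v, sform (u *m x) (v *m x) = lam * sform u v.

Definition in_center (z : 'M[F]_n) : Prop :=
  is_similarity z /\ forall y, is_similarity y -> z *m y = y *m z.
End Forms.

Definition order_pow (F : fieldType) (n q : nat) (x : 'M[F]_n) : Prop :=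
  exists k, x ^+ (q ^ k) = 1%:M.
Definition unipotent (F : fieldType) (n p : nat) (x : 'M[F]_n) : Prop :=
  order_pow p x.
Definition semisimple (F : fieldType) (n p : nat) (x : 'M[F]_n) : Prop :=
  exists m, (0 < m)%N /\ coprime m p /\ x ^+ m = 1%:M.
Definition irreducible_on (F : fieldType) (n : nat) (x : 'M[F]_n) : Prop :=
  (0 < n)%N /\ forall U : 'M[F]_n, stablemx U x -> \rank U = 0%N \/ \rank U = n.

(* If x is a p-element, the cyclic p-group <x> fixes a nonzero vector, as does
   every p-group acting linearly in characteristic p.  Otherwise x is
   semisimple and, by Maschke's theorem for <x>, every x-stable subspace has an
   x-stable complement; for the zero form and reducible x this is (2).  For a
   nondegenerate form, let U be an x-stable totally isotropic subspace of
   maximal dimension.  If 2 dim U < dim V, then dim U^perp > dim U, so an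
   x-stable complement of U meets U^perp nontrivially and contains a minimal
   x-stable subspace W.  As W :&: W^perp is x-stable, either it is 0 and W is
   nondegenerate, giving (3), or W is totally isotropic and U + W contradicts
   the maximality of U.  If 2 dim U = dim V we are in (4). *)

From HB Require Import structures.
From mathcomp Require Import all_boot all_order all_algebra all_fingroup.
From mathcomp Require Import pgroup cyclic mxrepresentation mxabelem zify.
Set Implicit Arguments. Unset Strict Implicit. Unset Printing Implicit Defensive.
Import GRing.Theory.
Local Open Scope ring_scope.

Section StableSubspaces.
Variables (F : fieldType) (n : nat).
Implicit Types U V W x : 'M[F]_n.

Lemma stablemxP U x :
  reflect (forall v : 'rV_n, (v <= U)%MS -> (v *m x <= U)%MS) (stablemx U x).
Proof.
apply: (iffP idP) => [Ux v vU | Ux]; first exact: submx_trans (submxMr x vU) Ux.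
by apply/row_subP => i; rewrite row_mul Ux ?row_sub.
Qed.

Lemma stablemx_cap U V x :
  stablemx U x -> stablemx V x -> stablemx (U :&: V)%MS x.
Proof.
move=> Ux Vx; rewrite sub_capmx (submx_trans (submxMr _ (capmxSl _ _)) Ux).
by rewrite (submx_trans (submxMr _ (capmxSr _ _)) Vx).
Qed.

Lemma stablemxX U x k : stablemx U x -> stablemx U (x ^+ k).
Proof.
move=> Ux; elim: k => [|k IHk]; first by rewrite expr0 -idmxE stablemxC.
by rewrite exprSr -mulmxE stablemxM.
Qed.

Lemma stablemx_invmx U x : x \in unitmx -> stablemx U x -> stablemx U (invmx x).
Proof.
move=> x_unit Ux.
have U_Ux : (U <= U *m x)%MS.
  by rewrite -(mxrank_leqif_sup Ux) mxrankMfree ?row_free_unit.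
by rewrite -{2}[U](mulmxK x_unit) submxMr.
Qed.

Definition minimal_stablemx x W :=
  [/\ stablemx W x, W != 0 &
      forall V, stablemx V x -> (V <= W)%MS -> V != 0 -> (W <= V)%MS].

Lemma minimal_stablemx_rank_lt x W V :
  minimal_stablemx x W -> stablemx V x -> V != 0 -> (\rank V < n)%N ->
  (\rank W < n)%N.
Proof.
case=> _ _ Wmin Vx V0 rV; rewrite ltn_neqAle rank_leq_col andbT.
apply: contraTneq rV => rW; rewrite -leqNgt -{1}rW mxrankS //.
by apply: Wmin => //; apply: submx_full; rewrite /row_full rW.
Qed.

Lemma addsmx_full_neq0 U W : (U + W :=: 1%:M)%MS -> (\rank U < n)%N -> W != 0.
Proof.
move=> UW_full; apply: contraTneq => W0; rewrite -leqNgt.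
by have := mxrank1 F n; rewrite -UW_full W0 addsmx0 => ->.
Qed.

End StableSubspaces.

Section FiniteField.
Variables (F : finFieldType) (n : nat).

Lemma minimal_stablemx_exists (x Y : 'M[F]_n) :
  stablemx Y x -> Y != 0 -> exists2 W, minimal_stablemx x W & (W <= Y)%MS.
Proof.
move=> Yx Y0.
pose P (W : 'M[F]_n) := [&& stablemx W x, (W <= Y)%MS & W != 0].
have PY : P Y by rewrite /P Yx submx_refl Y0.
case: (arg_minnP (fun W => \rank W) PY) => W /and3P[Wx WY W0] Wmin.
exists W => //; split=> // V Vx VW V0.
have rWV : (\rank W <= \rank V)%N by apply: Wmin; rewrite /P Vx V0 (submx_trans VW WY).
by rewrite -(mxrank_leqif_sup VW) eqn_leq rWV mxrankS.
Qed.

Lemma irreducible_or_proper_stablemx (x : 'M[F]_n) : (0 < n)%N ->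
  irreducible_on x \/
  exists U0 : 'M[F]_n, [/\ stablemx U0 x, U0 != 0 & (\rank U0 < n)%N].
Proof.
move=> n_gt0; pose P (U : 'M[F]_n) := [&& stablemx U x, U != 0 & (\rank U < n)%N].
case: (pickP P) => [U0 /and3P[] | no_U0]; first by right; exists U0.
left; split=> // U Ux; have := no_U0 U.
rewrite /P Ux -mxrank_eq0 -lt0n (ltn_neqAle (\rank U)) rank_leq_col andbT.
by case: posnP => [-> | _ /negbFE/eqP]; [left | right].
Qed.

End FiniteField.

Section CyclicRepresentation.
Variables (F : finFieldType) (n : nat) (x : 'M[F]_n.+1).
Hypothesis x_unit : x \in unitmx.

Let g : {unit 'M[F]_n.+1} := FinRing.Unit x_unit.

Let unit_mx_repr : mx_repr <[g]> (fun u => val u).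
Proof. by split=> [|u v _ _]; rewrite ?idmxE. Qed.

Let rG := MxRepresentation unit_mx_repr.

Let mxmodule_cycleE (U : 'M[F]_n.+1) : mxmodule rG U = stablemx U x.
Proof.
apply/mxmoduleP/idP => [Umod | Ux _ /cycleP[k ->]]; first exact: Umod _ (cycle_id g).
by rewrite /= FinRing.val_unitX stablemxX.
Qed.

Let order_cycle_dvdn m : x ^+ m = 1%:M -> (#[g]%g %| m)%N.
Proof.
move=> xm; rewrite order_dvdn; apply/eqP/val_inj.
by rewrite /= FinRing.val_unitX xm idmxE.
Qed.

Lemma unipotent_stable_line p k : p \in [pchar F] -> x ^+ (p ^ k) = 1%:M ->
  exists U : 'M[F]_n.+1, \rank U = 1%N /\ stablemx U x.
Proof.
move=> pF xpk; have p_pr := pcharf_prime pF.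
have pg : (p.-group <[g]>)%g.
  by apply: pnat_dvd (order_cycle_dvdn xpk) _; rewrite pnatX pnat_id.
have /rowV0Pn[v /rfix_mxP vx v0] :=
  @rfix_pgroup_pchar _ _ _ pF _ _ _ rG (ltn0Sn n) pg (subxx _).
exists <<v>>%MS; split; first by rewrite genmxE rank_rV v0.
by rewrite (eqmxMr x (genmxE v)) genmxE [v *m x](vx g (cycle_id g)).
Qed.

Lemma stablemx_complement m : m%:R != 0 :> F -> x ^+ m = 1%:M ->
  forall U : 'M[F]_n.+1, stablemx U x ->
  exists W : 'M[F]_n.+1, [/\ stablemx W x, (U :&: W = 0)%MS & (U + W :=: 1%:M)%MS].
Proof.
move=> m_nz xm U Ux.
have pg : ([pchar F]^'.-group <[g]>)%g.
  by apply: pnat_dvd (order_cycle_dvdn xm) _; rewrite pcharf'_nat.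
have Umod : mxmodule rG U by rewrite mxmodule_cycleE.
have [W Wmod UW /mxdirect_addsP UW0] :=
  @mx_Maschke_pchar _ _ _ _ rG pg U Umod (submx1 U).
by exists W; rewrite -mxmodule_cycleE.
Qed.

End CyclicRepresentation.

Section Orthogonality.
Variables (F : finFieldType) (n : nat) (sigma : {rmorphism F -> F}) (B : 'M[F]_n).
Local Notation f := (sform sigma B).
Implicit Types U V W : 'M[F]_n.

Lemma sformDl u u' v : f (u + u') v = f u v + f u' v.
Proof. by rewrite /sform !mulmxDl mxE. Qed.

Lemma sformDr u v v' : f u (v + v') = f u v + f u v'.
Proof. by rewrite /sform map_mxD linearD /= mulmxDr mxE. Qed.

Definition perpmx W := kermx (B *m (map_mx sigma W)^T).

Lemma sub_perpmxP W v :
  (v <= perpmx W)%MS <-> (forall w, (w <= W)%MS -> f v w = 0).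
Proof.
split=> [/sub_kermxP vW w /submxP[a ->] | vW].
  by rewrite /sform map_mxM trmx_mul !mulmxA -(mulmxA v) vW !mul0mx mxE.
apply/sub_kermxP/rowP => j; rewrite [RHS]mxE -(vW _ (row_sub j W)) /sform mulmxA !mxE.
by apply: eq_bigr => k _; rewrite !mxE.
Qed.

Lemma tot_isotropicE U : tot_isotropic sigma B U <-> (U <= perpmx U)%MS.
Proof.
split=> [Uti | UU u w uU]; last by have /sub_perpmxP := submx_trans uU UU; apply.
by apply/row_subP => i; apply/sub_perpmxP => w; apply: Uti; apply: row_sub.
Qed.

Lemma nondeg_on_cap_perpmx W : (W :&: perpmx W = 0)%MS -> nondeg_on sigma B W.
Proof.
move=> W_perpW0 u uW u_perpW; apply/eqP; rewrite -submx0 -W_perpW0 sub_capmx uW.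
exact/sub_perpmxP.
Qed.

Lemma sub_perpmx_adds U V W :
  (W <= perpmx U)%MS -> (W <= perpmx V)%MS -> (W <= perpmx (U + V)%MS)%MS.
Proof.
move=> WU WV; apply/row_subP => i; apply/sub_perpmxP => w /sub_addsmxP[[a b] ->] /=.
have /sub_perpmxP rU := submx_trans (row_sub i W) WU.
have /sub_perpmxP rV := submx_trans (row_sub i W) WV.
by rewrite sformDr rU ?rV ?submxMl ?addr0.
Qed.

Lemma form_nondeg_unitmx : form_nondeg sigma B -> B \in unitmx.
Proof.
move=> Bnd; rewrite -row_free_unit -kermx_eq0; apply/rowV0P => v /sub_kermxP vB.
by apply: Bnd; rewrite ?submx1 // => w _; rewrite /sform vB mul0mx mxE.
Qed.

Lemma mxrank_perpmx W : B \in unitmx -> \rank (perpmx W) = (n - \rank W)%N.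
Proof.
move=> B_unit; have B_full : row_full B by rewrite row_full_unit.
by rewrite /perpmx mxrank_ker (eqmxMfull _ B_full) mxrank_tr mxrank_map.
Qed.

Section Reflexive.
Hypothesis B_refl : is_hermitian sigma B \/ (sigma =1 id /\ is_alternating sigma B).

Lemma sform_eq0_sym u v : f u v = 0 -> f v u = 0.
Proof.
case: B_refl => [Bh | [_ Ba]] uv0; first by rewrite Bh uv0 rmorph0.
by have := Ba (u + v); rewrite !sformDl !sformDr !Ba uv0 add0r addr0 add0r.
Qed.

Lemma sub_perpmxC U V : (V <= perpmx U)%MS -> (U <= perpmx V)%MS.
Proof.
move=> VU; apply/row_subP => i; apply/sub_perpmxP => v vV.
by apply: sform_eq0_sym; have /sub_perpmxP := submx_trans vV VU; apply; apply: row_sub.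
Qed.

Lemma tot_isotropic_adds U V :
  (U <= perpmx U)%MS -> (V <= perpmx V)%MS -> (V <= perpmx U)%MS ->
  (U + V <= perpmx (U + V)%MS)%MS.
Proof.
move=> UU VV VU; rewrite addsmx_sub.
by apply/andP; split; apply: sub_perpmx_adds => //; apply: sub_perpmxC.
Qed.

End Reflexive.

Section Similarity.
Variables (x : 'M[F]_n) (lam : F).
Hypothesis x_unit : x \in unitmx.
Hypothesis x_sim : forall u v, f (u *m x) (v *m x) = lam * f u v.

Lemma stablemx_perpmx W : stablemx W x -> stablemx (perpmx W) x.
Proof.
move=> Wx; apply/stablemxP => v /sub_perpmxP vW; apply/sub_perpmxP => w wW.
have /stablemxP/(_ w wW) := stablemx_invmx x_unit Wx.
by rewrite -[w in f _ w](mulmxKV x_unit) x_sim => /vW ->; rewrite mulr0.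
Qed.

Lemma in_perp_stable U v :
  stablemx U x -> in_perp sigma B U v -> in_perp sigma B U (v *m x).
Proof.
move=> Ux Uv u uU; have /stablemxP/(_ u uU) := stablemx_invmx x_unit Ux.
by rewrite -[u in f u _](mulmxKV x_unit) x_sim => /Uv ->; rewrite mulr0.
Qed.

Lemma minimal_stablemx_nondeg_or_isotropic W : minimal_stablemx x W ->
  (W :&: perpmx W = 0)%MS \/ (W <= perpmx W)%MS.
Proof.
case=> Wx _ Wmin; have [-> | K0] := eqVneq (W :&: perpmx W)%MS 0; first by left.
right; apply: submx_trans (capmxSr W (perpmx W)).
by apply: Wmin K0; rewrite ?capmxSl ?stablemx_cap ?stablemx_perpmx.
Qed.

End Similarity.
End Orthogonality.

Section NondegenerateForm.
Variables (F : finFieldType) (n : nat) (sigma : {rmorphism F -> F}) (B : 'M[F]_n).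
Variables (x : 'M[F]_n) (lam : F).
Hypothesis B_refl : is_hermitian sigma B \/ (sigma =1 id /\ is_alternating sigma B).
Hypothesis B_nondeg : form_nondeg sigma B.
Hypothesis x_unit : x \in unitmx.
Hypothesis x_sim : forall u v, sform sigma B (u *m x) (v *m x) = lam * sform sigma B u v.
Hypothesis x_split : forall U : 'M[F]_n, stablemx U x ->
  exists W : 'M[F]_n, [/\ stablemx W x, (U :&: W = 0)%MS & (U + W :=: 1%:M)%MS].

Local Notation perpmx := (perpmx sigma B).

Let B_unit : B \in unitmx := form_nondeg_unitmx B_nondeg.

Lemma stable_isotropic_extension (U : 'M[F]_n) :
  stablemx U x -> (U <= perpmx U)%MS -> (\rank U).*2 != n ->
  exists W, [/\ minimal_stablemx x W, (W <= perpmx U)%MS & (U :&: W = 0)%MS].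
Proof.
move=> Ux UU rU.
have rU_perpU : (\rank U < \rank (perpmx U))%N.
  by have := mxrankS UU; rewrite mxrank_perpmx //; move: rU; rewrite -addnn; lia.
have [W0 [W0x UW0 UW0_full]] := x_split Ux.
pose Y := (W0 :&: perpmx U)%MS.
have perpU_UY : (perpmx U <= U + Y)%MS.
  by rewrite (matrix_modl W0 UU) sub_capmx submx_refl andbT UW0_full submx1.
have Y0 : Y != 0.
  apply: contraTneq rU_perpU => Y0; rewrite -leqNgt.
  by have := mxrankS perpU_UY; rewrite Y0 addsmx0.
have Yx : stablemx Y x := stablemx_cap W0x (stablemx_perpmx x_unit x_sim Ux).
have [W Wmin WY] := minimal_stablemx_exists Yx Y0.
exists W; split=> //; first exact: submx_trans WY (capmxSr _ _).
apply/eqP; rewrite -submx0 -UW0 capmxS //.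
exact: submx_trans WY (capmxSl _ _).
Qed.

Lemma nondeg_reducible_dichotomy (U0 : 'M[F]_n) :
  stablemx U0 x -> U0 != 0 -> (\rank U0 < n)%N ->
  (exists W : 'M[F]_n, [/\ \rank W <> 0%N, (\rank W < n)%N, nondeg_on sigma B W,
     stablemx W x & forall v, in_perp sigma B W v -> in_perp sigma B W (v *m x)]) \/
  (exists U : 'M[F]_n, [/\ tot_isotropic sigma B U, (\rank U).*2 = n & stablemx U x]).
Proof.
move=> U0x U0_nz rU0.
pose P (U : 'M[F]_n) := stablemx U x && (U <= perpmx U)%MS.
have P0 : P 0 by rewrite /P stable0mx sub0mx.
case: (arg_maxnP (fun U => \rank U) P0) => U /andP[Ux UU] Umax.
have [rU | rU] := eqVneq (\rank U).*2 n.
  by right; exists U; split=> //; apply/tot_isotropicE.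
have [W [Wmin WU UW]] := stable_isotropic_extension Ux UU rU.
have [Wx W_nz _] := Wmin.
case: (minimal_stablemx_nondeg_or_isotropic x_unit x_sim Wmin) => [W_nd | WW].
  left; exists W; split=> //.
  - by apply/eqP; rewrite mxrank_eq0.
  - exact: minimal_stablemx_rank_lt Wmin U0x U0_nz rU0.
  - exact: nondeg_on_cap_perpmx.
  - by move=> v; apply: in_perp_stable.
have : (\rank (U + W)%MS <= \rank U)%N.
  by apply: Umax; rewrite /P stableDmx ?tot_isotropic_adds.
by rewrite mxrank_disjoint_sum // -[leqRHS]addn0 leq_add2l leqn0 mxrank_eq0 (negbTE W_nz).
Qed.

End NondegenerateForm.

Theorem lemma1p11 (F : finFieldType) (p n : nat) (sigma : {rmorphism F -> F})
    (B : 'M[F]_n) (x : 'M[F]_n) :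
  p \in [pchar F] ->
  (forall a, sigma (sigma a) = a) ->
  (is_hermitian sigma B \/ (sigma =1 id /\ is_alternating sigma B)) ->
  (form_nondeg sigma B \/ B = 0) ->
  is_similarity sigma B x ->
  (exists q, prime q /\ order_pow q x) ->
  (exists r, prime r /\ in_center sigma B (x ^+ r) /\ ~ in_center sigma B x) ->
  (* (1) *) (
      unipotent p x /\
        exists U : 'M[F]_n, \rank U = 1%N /\ stablemx U x) \/
      (* (2) *)
      [/\ B = 0, semisimple p x &
        exists U W : 'M[F]_n, [/\ \rank U <> 0%N /\ \rank W <> 0%N,
          \rank (U :&: W)%MS = 0%N, \rank (U + W)%MS = n,
          stablemx U x & stablemx W x]] \/
      (* (3) *)
      [/\ form_nondeg sigma B, semisimple p x &
        exists U : 'M[F]_n, [/\ \rank U <> 0%N, (\rank U < n)%N,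
          nondeg_on sigma B U, stablemx U x &
          forall v, in_perp sigma B U v -> in_perp sigma B U (v *m x)]] \/
      (* (4) *)
      [/\ form_nondeg sigma B, max_witt_index sigma B, semisimple p x &
        exists U : 'M[F]_n, [/\ tot_isotropic sigma B U, (\rank U).*2 = n
                              & stablemx U x]] \/
      (* (5) *)
      (semisimple p x /\ irreducible_on x).
Proof.
case: n B x => [|n] B x pF _ B_refl B_nd_or_0 [x_unit [lam [_ x_sim]]]
  [q [q_pr [k xqk]]] [r [_ [xr_central x_noncentral]]].
  by case: x_noncentral; rewrite (_ : x = x ^+ r) // [LHS]thinmx0 [RHS]thinmx0.
have p_pr := pcharf_prime pF.
case: (eqVneq q p) xqk => [-> | q_neq_p] xqk.
  by left; split; [exists k | exact: (unipotent_stable_line x_unit pF xqk)].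
have qk_nz : (q ^ k)%:R != 0 :> F.
  by rewrite -(dvdn_pcharf pF) Euclid_dvdX // dvdn_prime2 // eq_sym (negbTE q_neq_p).
have x_ss : semisimple p x.
  exists (q ^ k)%N; split=> //; first by rewrite expn_gt0 prime_gt0.
  by rewrite coprimeXl // prime_coprime // dvdn_prime2.
have x_split := stablemx_complement x_unit qk_nz xqk.
have [x_irr | [U0 [U0x U0_nz rU0]]] := irreducible_or_proper_stablemx x (ltn0Sn n).
  by do 4 right.
case: B_nd_or_0 => [B_nd | B0].
  have [[W W_props] | [U [Uti rU Ux]]] :=
    nondeg_reducible_dichotomy B_refl B_nd x_unit x_sim x_split U0x U0_nz rU0.
    by right; right; left; split=> //; exists W.
  by do 3 right; left; split=> //; [exists U | exists U].
right; left; split=> //.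
have [W [Wx U0W U0W_full]] := x_split U0 U0x.
exists U0, W; split=> //.
- by split; apply/eqP; rewrite mxrank_eq0 // (addsmx_full_neq0 U0W_full rU0).
- by rewrite U0W mxrank0.
- by rewrite U0W_full mxrank1.
Qed.
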